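(* Let $\phi$ be a reduced Boolean formula in the input variables $x_1,\dots,x_n$ and let $Q \subseteq [0,1]^n$ be a convex set. Then $\phi(Q)$ is a convex subset of $Q$. Moreover, $\phi(Q)$ contains every point $x \in \{0,1\}^n$ such that $x \in Q$ and $\phi(x) = 1$; that is, $Q \cap \phi^{-1}(1) \subseteq \phi(Q)$.
   Context: Boolean formulas are built from input variables $x_1,\dots,x_n$ using $\wedge$, $\vee$, $\neg$; a formula is interpreted as a function $\{0,1\}^n \to \{0,1\}$ (with $x_i=1$ meaning true). A formula is reduced if negations are applied only to input variables. Every reduced formula is either a literal $x_i$ or $\neg x_i$, or a conjunction or disjunction of two reduced formulas. For a reduced formula $\phi$ and a convex set $Q \subseteq [0,1]^n$, the set $\phi(Q)\subseteq \mathbb{R}^n$ is defined recursively: a non-negated variable $x_i$ is replaced by $\{x \in Q : x_i = 1\}$; a negated variable $\neg x_i$ is replaced by $\{x \in Q : x_i = 0\}$; a conjunction of two subformulas is replaced by the intersection of the corresponding sets; a disjunction of two subformulas is replaced by the convex hull of the union of the corresponding sets. *)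

From mathcomp Require Import all_boot all_order all_algebra.
From mathcomp Require Import all_classical all_reals.
Set Implicit Arguments. Unset Strict Implicit. Unset Printing Implicit Defensive.
Import Order.TTheory GRing.Theory Num.Theory.
Local Open Scope ring_scope.
Local Open Scope classical_set_scope.

(* Reduced Boolean formulas over variables x_i, i : 'I_n:
   negations only on input variables. *)
Inductive rformula (n : nat) : Type :=
  | RVar : 'I_n -> rformula n
  | RNVar : 'I_n -> rformula n
  | RAnd : rformula n -> rformula n -> rformula n
  | ROr : rformula n -> rformula n -> rformula n.

Fixpoint reval n (phi : rformula n) (b : 'I_n -> bool) : bool :=
  match phi with
  | RVar i => b i
  | RNVar i => ~~ b i
  | RAnd p q => reval p b && reval q b
  | ROr p q => reval p b || reval q b
  end.

Definition convex_set (R : realType) n (S : set 'rV[R]_n) : Prop :=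
  forall x y t, S x -> S y -> 0 <= t -> t <= 1 ->
    S ((1 - t) *: x + t *: y).

Definition conv_hull (R : realType) n (A : set 'rV[R]_n) : set 'rV[R]_n :=
  [set x | forall C, convex_set C -> A `<=` C -> C x].

Definition unit_cube (R : realType) n : set 'rV[R]_n :=
  [set x | forall i, 0 <= x ord0 i <= 1].

Fixpoint formula_set (R : realType) n (phi : rformula n) (Q : set 'rV[R]_n)
  : set 'rV[R]_n :=
  match phi with
  | RVar i => [set x | Q x /\ x ord0 i = 1]
  | RNVar i => [set x | Q x /\ x ord0 i = 0]
  | RAnd p q => formula_set p Q `&` formula_set q Q
  | ROr p q => conv_hull (formula_set p Q `|` formula_set q Q)
  end.

Definition bool_pt (R : realType) n (b : 'I_n -> bool) : 'rV[R]_n :=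
  \row_i (b i)%:R.

From mathcomp Require Import all_boot all_order all_algebra.
From mathcomp Require Import all_classical all_reals.
Set Implicit Arguments. Unset Strict Implicit. Unset Printing Implicit Defensive.
Import Order.TTheory GRing.Theory Num.Theory.
Local Open Scope ring_scope.
Local Open Scope classical_set_scope.

(* Literals cut Q by a coordinate hyperplane,
   conjunctions intersect and disjunctions take convex hulls, and all three
   operations preserve convexity and, since Q is convex, inclusion in Q.
   A 0/1 point of Q satisfying a literal lies on its hyperplane, and
   satisfying a conjunction (disjunction) puts it in both (one of) the
   sets, hence in their intersection (the hull of their union). *)

Section ConvexSets.
Variables (R : realType) (n : nat).
Implicit Types (A B S : set 'rV[R]_n).

Lemma convex_setI A B : convex_set A -> convex_set B -> convex_set (A `&` B).
Proof.
by move=> cA cB x y t [Ax Bx] [Ay By] t0 t1; split; [exact: cA | exact: cB].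
Qed.

Lemma convex_set_coord_eq A (i : 'I_n) (c : R) :
  convex_set A -> convex_set [set x | A x /\ x ord0 i = c].
Proof.
move=> cA x y t [Ax xi] [Ay yi] t0 t1; split; first exact: cA.
by rewrite !mxE xi yi -mulrDl subrK mul1r.
Qed.

Lemma conv_hull_convex A : convex_set (conv_hull A).
Proof.
by move=> x y t hx hy t0 t1 S cS AS; apply: cS (hx S cS AS) (hy S cS AS) _ _.
Qed.

Lemma sub_conv_hull A : A `<=` conv_hull A.
Proof. by move=> x Ax S _; apply. Qed.

Lemma conv_hull_min A S : convex_set S -> A `<=` S -> conv_hull A `<=` S.
Proof. by move=> cS AS x; apply. Qed.

End ConvexSets.

Lemma bool_ptE (R : realType) n (b : 'I_n -> bool) i :
  bool_pt R b ord0 i = (b i)%:R.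
Proof. exact: mxE. Qed.

Section FormulaSet.
Variables (R : realType) (n : nat) (Q : set 'rV[R]_n).
Hypothesis convexQ : convex_set Q.

Lemma formula_set_convex (phi : rformula n) : convex_set (formula_set phi Q).
Proof.
elim: phi => [i|i|p cp q cq|p _ q _] /=.
- exact: convex_set_coord_eq.
- exact: convex_set_coord_eq.
- exact: convex_setI.
- exact: conv_hull_convex.
Qed.

Lemma formula_set_sub (phi : rformula n) : formula_set phi Q `<=` Q.
Proof.
elim: phi => [i|i|p sp q _|p sp q sq] /=.
- by move=> x [].
- by move=> x [].
- by move=> x [/sp].
- by apply: conv_hull_min convexQ _ => x [/sp | /sq].
Qed.

Lemma formula_set_bool_pt (phi : rformula n) (b : 'I_n -> bool) :
  Q (bool_pt R b) -> reval phi b -> formula_set phi Q (bool_pt R b).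
Proof.
move=> Qb; elim: phi => [i|i|p bp q bq|p bp q bq] /=.
- by move=> bi; split; rewrite // bool_ptE bi.
- by move/negbTE => bi; split; rewrite // bool_ptE bi.
- by case/andP=> /bp pb /bq qb.
- by case/orP=> [/bp pb | /bq qb]; apply: sub_conv_hull; [left | right].
Qed.

End FormulaSet.

Theorem proposition4p1 (R : realType) (n : nat) (phi : rformula n)
  (Q : set 'rV[R]_n) :
  Q `<=` @unit_cube R n -> convex_set Q ->
  [/\ convex_set (formula_set phi Q), formula_set phi Q `<=` Q &
      forall b : 'I_n -> bool, Q (@bool_pt R n b) -> reval phi b ->
        formula_set phi Q (@bool_pt R n b)].
Proof.
move=> _ convexQ; split.
- exact: formula_set_convex.
- exact: formula_set_sub.
- exact: formula_set_bool_pt.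
Qed.
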